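(* Let $m,n\in\mathbb N$, $M_A=M_m(\mathbb C)$, $M_B=M_n(\mathbb C)$, let $U_A\in M_A$, $U_B\in M_B$ be unitary matrices, and let $\{e_{ij}\}$ be the matrix units of $M_m(\mathbb C)$. For a linear map $\psi:M_A\to M_B$ let $C^U_\psi:=\sum_{i,j=1}^m e_{ij}\otimes\psi(U_Ae_{ij})\in M_A\otimes M_B$ (the Choi $U$-matrix). Then $\psi$ is $(U_A,U_B)$-CP if and only if $C^U_\psi$ is $I_A\otimes U_B$-positive, i.e. $(I_m\otimes U_B^* )C^U_\psi$ is positive semidefinite.
   Context: For $k\in\mathbb N$ and a unitary $U$, write $U^k=\mathrm{diag}(U,\dots,U)$. A linear map $\psi:M_A\to M_B$ is $(U_A,U_B)$-CP if for every $k\in\mathbb N$ and every $V=[V_{ij}]\in M_k(M_A)$ with $(U_A^k)^*V\ge0$, one has $(U_B^k)^*[\psi(V_{ij})]\ge0$. $M_A\otimes M_B$ is identified with block matrices $M_m(M_n(\mathbb C))$. *)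

From HB Require Import structures.
From mathcomp Require Import all_boot all_order all_algebra.
From mathcomp Require Import sesquilinear spectral.
From mathcomp Require Import complex mxtens.
From mathcomp Require Import reals.

Set Implicit Arguments.
Unset Strict Implicit.
Unset Printing Implicit Defensive.

Import Order.TTheory GRing.Theory Num.Theory.
Local Open Scope ring_scope.
Local Open Scope sesquilinear_scope.

Definition adjmx {C : numClosedFieldType} {p q : nat} (A : 'M[C]_(p, q)) : 'M[C]_(q, p) :=
  A ^t*.

Definition psdmx {C : numClosedFieldType} {p : nat} (A : 'M[C]_p) : Prop :=
  adjmx A = A /\ forall v : 'cV[C]_p, 0 <= (adjmx v *m A *m v) 0 0.

(* The block matrix [V_ij] in M_k(M_p), identified with 'M_(k * p)
   (block (i,j) sits at rows i*p + _, columns j*p + _ ; Kronecker layout of *t). *)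
Definition blockmx {C : numClosedFieldType} {k p : nat}
  (V : 'I_k -> 'I_k -> 'M[C]_p) : 'M[C]_(k * p) :=
  \sum_(i < k) \sum_(j < k) (delta_mx i j *t V i j).

Definition diagk {C : numClosedFieldType} (k : nat) {p : nat} (U : 'M[C]_p) : 'M[C]_(k * p) :=
  (1%:M : 'M[C]_k) *t U.

Definition UCP {C : numClosedFieldType} {m n : nat} (UA : 'M[C]_m) (UB : 'M[C]_n)
  (psi : 'M[C]_m -> 'M[C]_n) : Prop :=
  forall (k : nat) (V : 'I_k -> 'I_k -> 'M[C]_m),
    psdmx (adjmx (diagk k UA) *m blockmx V) ->
    psdmx (adjmx (diagk k UB) *m blockmx (fun i j => psi (V i j))).

Definition choiU {C : numClosedFieldType} {m n : nat} (UA : 'M[C]_m)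
  (psi : 'M[C]_m -> 'M[C]_n) : 'M[C]_(m * n) :=
  \sum_(i < m) \sum_(j < m) (delta_mx i j *t psi (UA *m delta_mx i j)).

(* Substituting V_ij = U_A W_ij turns (U_A, U_B)-complete positivity of psi into
   ordinary complete positivity of phi X := U_B^* psi (U_A X), and
   (I ⊗ U_B^* ) C^U_psi is exactly the Choi matrix [phi e_ij]; so the theorem is
   Choi's theorem for phi.  Necessity there is the positivity of [e_ij].  For
   sufficiency, linearity gives [phi W_ij] = [sum_ab W_ij(a,b) phi e_ab]; factor
   the Choi matrix as B^* B: each row of B, reshaped into a matrix M, contributes
   the congruence (I ⊗ M)^* [W_ij] (I ⊗ M), a positive matrix. *)

From HB Require Import structures.
From mathcomp Require Import all_boot all_order all_algebra.
From mathcomp Require Import sesquilinear spectral.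
From mathcomp Require Import complex mxtens.
From mathcomp Require Import reals.

Set Implicit Arguments.
Unset Strict Implicit.
Unset Printing Implicit Defensive.

Import Order.TTheory GRing.Theory Num.Theory.
Local Open Scope ring_scope.

Section CompletePositivity.
Variable C : numClosedFieldType.

Definition completely_positive p q (phi : 'M[C]_p -> 'M[C]_q) : Prop :=
  forall k (W : 'I_k -> 'I_k -> 'M[C]_p),
    psdmx (blockmx W) -> psdmx (blockmx (fun i j => phi (W i j))).

Definition choi p q (phi : 'M[C]_p -> 'M[C]_q) : 'M[C]_(p * q) :=
  blockmx (fun i j => phi (delta_mx i j)).

Lemma adjmxE p q (A : 'M[C]_(p, q)) i j : adjmx A i j = (A j i)^*.
Proof. by rewrite !mxE. Qed.

Lemma adjmxK p q (A : 'M[C]_(p, q)) : adjmx (adjmx A) = A.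
Proof. exact: trmxCK. Qed.

Lemma adjmx_mul p q r (A : 'M[C]_(p, q)) (B : 'M[C]_(q, r)) :
  adjmx (A *m B) = adjmx B *m adjmx A.
Proof. by rewrite /adjmx trmx_mul map_mxM. Qed.

Lemma adjmx_tens p q r s (A : 'M[C]_(p, q)) (B : 'M[C]_(r, s)) :
  adjmx (A *t B) = adjmx A *t adjmx B.
Proof. by rewrite /adjmx trmx_tens map_mxT. Qed.

Lemma adjmx1 p : adjmx (1%:M : 'M[C]_p) = 1%:M.
Proof. by rewrite /adjmx trmx1 map_mx1. Qed.

Lemma adjmx_diagk k p (U : 'M[C]_p) : adjmx (diagk k U) = diagk k (adjmx U).
Proof. by rewrite adjmx_tens adjmx1. Qed.

Lemma psdmx0 p : psdmx (0 : 'M[C]_p).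
Proof.
split; first by rewrite /adjmx trmx0 map_mx0.
by move=> v; rewrite mulmx0 mul0mx mxE.
Qed.

Lemma psdmxD p (A B : 'M[C]_p) : psdmx A -> psdmx B -> psdmx (A + B).
Proof.
move=> [hA qA] [hB qB]; split.
  by rewrite /adjmx linearD map_mxD -!/(adjmx _) hA hB.
by move=> v; rewrite mulmxDr mulmxDl mxE addr_ge0.
Qed.

Lemma psdmx_sum p N (F : 'I_N -> 'M[C]_p) :
  (forall l, psdmx (F l)) -> psdmx (\sum_(l < N) F l).
Proof. by move=> psdF; apply: big_ind => //; [exact: psdmx0 | exact: psdmxD]. Qed.

Lemma psdmx_congr p q (W : 'M[C]_p) (K : 'M[C]_(p, q)) :
  psdmx W -> psdmx (adjmx K *m W *m K).
Proof.
move=> [hW qW]; split; first by rewrite !adjmx_mul adjmxK hW mulmxA.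
by move=> v; have := qW (K *m v); rewrite adjmx_mul !mulmxA.
Qed.

Lemma psdmx_gram p q (B : 'M[C]_(p, q)) : psdmx (adjmx B *m B).
Proof.
split; first by rewrite adjmx_mul adjmxK.
move=> v; rewrite -!mulmxA mulmxA -adjmx_mul mxE.
by apply: sumr_ge0 => l _; rewrite adjmxE mulrC mul_conjC_ge0.
Qed.

Lemma psdmx_diag_ge0 p (A : 'M[C]_p) i : psdmx A -> 0 <= A i i.
Proof.
move=> [_ /(_ (delta_mx i 0))].
by rewrite -mulmxA -colE /adjmx trmx_delta map_delta_mx -rowE !mxE.
Qed.

Lemma psdmx_factor p (A : 'M[C]_p) :
  psdmx A -> exists B : 'M[C]_p, A = adjmx B *m B.
Proof.
move=> psdA; have [hA _] := psdA.
have /hermitian_normalmx/orthomx_spectralP : A \is hermsymmx.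
  by rewrite is_hermitianmxE expr0 scale1r -/(adjmx A) hA.
set P := spectralmx A; set d := spectral_diag A.
have /unitarymxP unitP : P \is unitarymx := spectral_unitarymx A.
rewrite invmx_unitary ?spectral_unitarymx // -/(adjmx P) => defA.
have d_ge0 l : 0 <= d 0 l.
  have := psdmx_diag_ge0 l (psdmx_congr (adjmx P) psdA).
  rewrite adjmxK defA !mulmxA unitP mul1mx -mulmxA unitP mulmx1.
  by rewrite mxE eqxx mulr1n.
pose s := \row_l sqrtC (d 0 l).
exists (diag_mx s *m P).
rewrite adjmx_mul mulmxA -[_ *m diag_mx s]mulmxA.
rewrite /adjmx tr_diag_mx map_diag_mx mulmx_diag defA; congr (_ *m diag_mx _ *m _).
by apply/rowP => l; rewrite !mxE /= geC0_conj ?sqrtC_ge0 // -expr2 sqrtCK.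
Qed.

Lemma blockmxE k p (V : 'I_k -> 'I_k -> 'M[C]_p) i a j b :
  blockmx V (mxtens_index (i, a)) (mxtens_index (j, b)) = V i j a b.
Proof.
rewrite /blockmx summxE (bigD1 i) //= summxE (bigD1 j) //= tensmxE !mxE !eqxx mul1r.
rewrite big1 ?addr0 => [|j' /negPf ne_j'j]; last first.
  by rewrite tensmxE mxE eq_sym ne_j'j andbF mul0r.
rewrite big1 ?addr0 // => i' /negPf ne_i'i; rewrite summxE big1 // => j' _.
by rewrite tensmxE mxE eq_sym ne_i'i mul0r.
Qed.

Lemma eq_blockmx k p (V V' : 'I_k -> 'I_k -> 'M[C]_p) :
  (forall i j, V i j = V' i j) -> blockmx V = blockmx V'.
Proof. by move=> eqV; apply: eq_bigr => i _; apply: eq_bigr => j _; rewrite eqV. Qed.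

Lemma mul_diagk_blockmx k p (U : 'M[C]_p) (V : 'I_k -> 'I_k -> 'M[C]_p) :
  diagk k U *m blockmx V = blockmx (fun i j => U *m V i j).
Proof.
rewrite mulmx_sumr; apply: eq_bigr => i _; rewrite mulmx_sumr; apply: eq_bigr => j _.
by rewrite tensmx_mul mul1mx.
Qed.

Lemma blockmx_congr k p q (W : 'I_k -> 'I_k -> 'M[C]_p) (M : 'M[C]_(p, q)) :
  adjmx ((1%:M : 'M_k) *t M) *m blockmx W *m ((1%:M : 'M_k) *t M) =
  blockmx (fun i j => adjmx M *m W i j *m M).
Proof.
rewrite adjmx_tens adjmx1 mulmx_sumr mulmx_suml; apply: eq_bigr => i _.
rewrite mulmx_sumr mulmx_suml; apply: eq_bigr => j _.
by rewrite !tensmx_mul mul1mx mulmx1.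
Qed.

Lemma psdmx_blockmx_delta p : psdmx (blockmx (fun i j : 'I_p => delta_mx i j : 'M[C]_p)).
Proof.
pose u : 'rV[C]_(p * p) := \row_X ((mxtens_unindex X).1 == (mxtens_unindex X).2)%:R.
suff -> : blockmx (fun i j => delta_mx i j) = adjmx u *m u by apply: psdmx_gram.
apply/matrixP => X Y; case: (mxtens_indexP X) => i a; case: (mxtens_indexP Y) => j b.
rewrite blockmxE [RHS]mxE big_ord1 adjmxE !mxE !mxtens_indexK /=.
by rewrite conjC_nat -natrM mulnb [a == i]eq_sym [b == j]eq_sym.
Qed.

Lemma linear_matrix_sum_delta p q (phi : {linear 'M[C]_p -> 'M[C]_q}) X :
  phi X = \sum_a \sum_b X a b *: phi (delta_mx a b).
Proof.
rewrite {1}(matrix_sum_delta X) linear_sum; apply: eq_bigr => a _.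
by rewrite linear_sum; apply: eq_bigr => b _; rewrite linearZ.
Qed.

Lemma psdmx_blockmx_image k p q (W : 'I_k -> 'I_k -> 'M[C]_p)
    (D : 'I_p -> 'I_p -> 'M[C]_q) :
  psdmx (blockmx W) -> psdmx (blockmx D) ->
  psdmx (blockmx (fun i j => \sum_a \sum_b W i j a b *: D a b)).
Proof.
move=> psdW /psdmx_factor[B defD].
pose M l : 'M[C]_(p, q) := \matrix_(a, r) B l (mxtens_index (a, r)).
have DE a b r s : D a b r s = \sum_l (M l a r)^* * M l b s.
  by rewrite -blockmxE defD mxE; apply: eq_bigr => l _; rewrite adjmxE !mxE.
suff -> : blockmx (fun i j => \sum_a \sum_b W i j a b *: D a b) =
    \sum_l adjmx ((1%:M : 'M_k) *t M l) *m blockmx W *m (1%:M *t M l).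
  by apply: psdmx_sum => l; apply: psdmx_congr.
apply/matrixP => X Y; case: (mxtens_indexP X) => i r; case: (mxtens_indexP Y) => j s.
rewrite blockmxE !summxE; under [RHS]eq_bigr do rewrite blockmx_congr blockmxE.
under [RHS]eq_bigr do rewrite mxE.
under [RHS]eq_bigr do under eq_bigr do rewrite mxE mulr_suml.
under [RHS]eq_bigr do rewrite exchange_big.
rewrite [RHS]exchange_big; apply: eq_bigr => a _.
rewrite summxE [RHS]exchange_big; apply: eq_bigr => b _.
rewrite mxE DE mulr_sumr; apply: eq_bigr => l _.
by rewrite adjmxE mulrCA mulrA.
Qed.

Theorem completely_positive_choi p q (phi : {linear 'M[C]_p -> 'M[C]_q}) :
  completely_positive phi <-> psdmx (choi phi).
Proof.
split=> [cp_phi | psd_choi k W psdW]; first exact: cp_phi _ _ (psdmx_blockmx_delta p).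
rewrite (eq_blockmx (fun i j => linear_matrix_sum_delta phi (W i j))).
exact: psdmx_blockmx_image.
Qed.

Lemma UCP_completely_positive m n (UA : 'M[C]_m) (UB : 'M[C]_n)
    (psi : 'M[C]_m -> 'M[C]_n) :
  UA \is unitarymx ->
  UCP UA UB psi <-> completely_positive (fun X => adjmx UB *m psi (UA *m X)).
Proof.
move=> /unitarymxP UA_adjUA; have adjUA_UA : adjmx UA *m UA = 1%:M by apply: mulmx1C.
split=> cp k W psdW.
  have := cp k (fun i j => UA *m W i j); rewrite !adjmx_diagk !mul_diagk_blockmx; apply.
  by under eq_blockmx do rewrite mulmxA adjUA_UA mul1mx.
rewrite adjmx_diagk mul_diagk_blockmx.
rewrite adjmx_diagk mul_diagk_blockmx in psdW.
by have := cp k _ psdW; under eq_blockmx do rewrite mulmxA UA_adjUA mul1mx.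
Qed.

End CompletePositivity.

Theorem theorem3p4 (R : realType) (m n : nat)
  (UA : 'M[R[i]]_m) (UB : 'M[R[i]]_n)
  (hUA : UA \is unitarymx) (hUB : UB \is unitarymx)
  (psi : {linear 'M[R[i]]_m -> 'M[R[i]]_n}) :
  UCP UA UB psi <->
  psdmx ((1%:M : 'M[R[i]]_m) *t adjmx UB *m choiU UA psi).
Proof.
pose phi : {linear 'M[R[i]]_m -> 'M[R[i]]_n} := mulmx (adjmx UB) \o psi \o mulmx UA.
have -> : (1%:M : 'M_m) *t adjmx UB *m choiU UA psi = choi phi.
  exact: mul_diagk_blockmx.
rewrite -completely_positive_choi.
exact: UCP_completely_positive.
Qed.
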